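(* Let $q>1$, $0\le M_0<M$, let $u$ be a sufficiently smooth $L$-periodic solution of $u_t=-\alpha uu_x+\beta u_{xxx}$ on $[0,T]\times\mathbb{R}$, and $r>\sup_{t,x}|u(t,x)|$. Assume $u^{(0)}_k=u(0,k\Delta x)$, that $u^{(0)},\dots,u^{(M_0)}$ are obtained successively as solutions of the scheme, that $r\ge\max_{m'\le M_0}\|u^{(m')}\|_\infty$, that $\Delta t<\min\{\varepsilon_1(q,r,\Delta x),\varepsilon_2(q,r,\Delta x)\}$, and let $u^{(M_0+1)}$ be the solution of the scheme at step $M_0$ with $\|u^{(M_0+1)}\|_\infty\le qr$. Let $C(q,r)>0$ be a constant, independent of $\Delta t$ and $\Delta x$, such that for sufficiently small $\Delta t\le\Delta x$ one has $\|e^{(m)}\|_{H^1}\le C(q,r)((\Delta t)^2+(\Delta x)^2)$ for $m=0,\dots,M_0+1$, and let $\Delta t\le \Delta x$ be that small. If $$\Delta x\le\left(\frac{r-\sup_{(t,x)\in[0,T]\times[0,L]}|u(t,x)|}{2\hat L\,C(q,r)}\right)^{1/2},\qquad \hat L=\sqrt2\max\{\sqrt L,1/\sqrt L\},$$ then $\|u^{(m)}\|_\infty\le r$ for $m=0,1,\dots,M_0+1$.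
   Context: $L>0$, $K\in\mathbb{N}$, $\Delta x=L/K$; $T>0$, $M\in\mathbb{N}$, $\Delta t=T/M$; $\alpha\in\mathbb{R}$, $\beta\ne0$. Grid functions are $K$-periodic real sequences. $\delta^+_x v_k=(v_{k+1}-v_k)/\Delta x$, $\delta^{\langle 1\rangle}_x v_k = (v_{k+1}-v_{k-1})/(2\Delta x)$, $\delta^{\langle 2\rangle}_x v_k = (v_{k+1}-2v_k+v_{k-1})/(\Delta x)^2$, $\|v\|=(\sum_{k=1}^K v_k^2\Delta x)^{1/2}$, $\|v\|_\infty=\max_k|v_k|$, $\|v\|_{H^1}=(\|v\|^2+\|\delta^+_xv\|^2)^{1/2}$; $\delta^+_t v^{(n)}=(v^{(n+1)}-v^{(n)})/\Delta t$, $\mu^+_t v^{(n)}=(v^{(n+1)}+v^{(n)})/2$. The scheme: $u^{(n+1)}$ solves it at step $n$ if $\delta^+_t u^{(n)}_k = -\frac{\alpha}{6}\delta^{\langle 1\rangle}_x\{(u^{(n+1)}_k)^2 + u^{(n+1)}_k u^{(n)}_k + (u^{(n)}_k)^2\} + \beta\delta^{\langle 1\rangle}_x\delta^{\langle 2\rangle}_x \mu^+_t u^{(n)}_k$ for all $k$. $\varepsilon_1(q,r,\Delta x) = (q-1)(\Delta x)^3[\frac{|\alpha|}{6}(\Delta x)^2(q^2+q+1)r + \frac{3}{2}|\beta|(q+1)]^{-1}$, $\varepsilon_2(q,r,\Delta x) = (\Delta x)^3[\frac{|\alpha|}{6}(\Delta x)^2(2q+1)r + \frac{3}{2}|\beta|]^{-1}$.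 $\tilde u^{(m)}_k=u(m\Delta t,k\Delta x)$, $e^{(m)}=u^{(m)}-\tilde u^{(m)}$. *)

From Stdlib Require Import Reals ZArith List Lra.
From Coquelicot Require Import Coquelicot.
Import ListNotations.
Open Scope R_scope.

(* Grid functions: K-periodic real sequences, represented as Z -> R
   (periodicity is imposed as a hypothesis where needed). *)

Definition gsum (K : nat) (f : Z -> R) : R :=
  fold_right Rplus 0 (map (fun i => f (Z.of_nat i)) (seq 1 K)).

Definition gmax_abs (K : nat) (v : Z -> R) : R :=
  fold_right Rmax 0 (map (fun i => Rabs (v (Z.of_nat i))) (seq 1 K)).

Definition dplus (dx : R) (v : Z -> R) : Z -> R :=
  fun k => (v (k + 1)%Z - v k) / dx.
Definition d1 (dx : R) (v : Z -> R) : Z -> R :=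
  fun k => (v (k + 1)%Z - v (k - 1)%Z) / (2 * dx).
Definition d2 (dx : R) (v : Z -> R) : Z -> R :=
  fun k => (v (k + 1)%Z - 2 * v k + v (k - 1)%Z) / (dx ^ 2).

Definition l2norm (K : nat) (dx : R) (v : Z -> R) : R :=
  sqrt (gsum K (fun k => v k ^ 2 * dx)).
Definition supnorm (K : nat) (v : Z -> R) : R := gmax_abs K v.
Definition h1norm (K : nat) (dx : R) (v : Z -> R) : R :=
  sqrt (l2norm K dx v ^ 2 + l2norm K dx (dplus dx v) ^ 2).

Definition scheme_step (dx dt alpha beta : R) (v0 v1 : Z -> R) : Prop :=
  forall k : Z,
    (v1 k - v0 k) / dt =
      - (alpha / 6) * d1 dx (fun j => v1 j ^ 2 + v1 j * v0 j + v0 j ^ 2) k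
      + beta * d1 dx (d2 dx (fun j => (v1 j + v0 j) / 2)) k.

Definition veps1 (alpha beta q r dx : R) : R :=
  (q - 1) * dx ^ 3 /
    (Rabs alpha / 6 * dx ^ 2 * (q ^ 2 + q + 1) * r + 3 / 2 * Rabs beta * (q + 1)).
Definition veps2 (alpha beta q r dx : R) : R :=
  dx ^ 3 / (Rabs alpha / 6 * dx ^ 2 * (2 * q + 1) * r + 3 / 2 * Rabs beta).

Definition Lhat (L : R) : R := sqrt 2 * Rmax (sqrt L) (1 / sqrt L).

Definition kdv_solution (alpha beta L T : R) (u : R -> R -> R) : Prop :=
  (forall t x, u t (x + L) = u t x) /\
  (forall t x, 0 <= t <= T ->
     ex_derive (fun s => u s x) t /\
     (forall n, (n <= 3)%nat -> ex_derive_n (fun y => u t y) n x) /\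
     Derive (fun s => u s x) t =
       - alpha * u t x * Derive (fun y => u t y) x
       + beta * Derive_n (fun y => u t y) 3 x).

(* Write [e] for the grid error [u^(m) - u~^(m)].  On the grid [|e_j - e_i|] is at most the total
   variation of [e], which by Cauchy-Schwarz is at most [L^(1/2) ||delta^+ e||]; averaging
   [e_j^2 <= 2 e_i^2 + 2 (e_j - e_i)^2] over [i] gives the discrete Sobolev inequality
   [||e||_inf <= Lhat ||e||_(H^1)].  With the assumed [H^1] error bound and the choice of
   [Delta x], [||e||_inf <= r - sup |u|], and the triangle inequality gives [||u^(m)||_inf <= r]. *)
From Stdlib Require Import Reals ZArith List Lra Lia Psatz.
From Coquelicot Require Import Coquelicot.
Open Scope R_scope.

Lemma sum_n_m_le_loc (a b : nat -> R) (n m : nat) :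
  (n <= m)%nat -> (forall k, (n <= k <= m)%nat -> a k <= b k) ->
  sum_n_m a n m <= sum_n_m b n m.
Proof.
  intros Hnm Hab. rewrite !sum_n_m_Reals by exact Hnm.
  apply sum_Rle. intros k Hk. apply Hab. lia.
Qed.

Lemma sum_n_m_nonneg (a : nat -> R) (n m : nat) :
  (forall k, 0 <= a k) -> 0 <= sum_n_m a n m.
Proof.
  intro Ha. replace 0 with (sum_n_m (fun _ => 0) n m) by exact (sum_n_m_const_zero n m).
  apply sum_n_m_le. exact Ha.
Qed.

Lemma sum_n_m_le_subrange (a : nat -> R) (n m n' m' : nat) :
  (forall k, 0 <= a k) -> (n <= n')%nat -> (n' <= S m')%nat -> (m' <= m)%nat ->
  sum_n_m a n' m' <= sum_n_m a n m.
Proof.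
  intros Ha Hn Hnm' Hm.
  assert (Hright : sum_n_m a n' m' <= sum_n_m a n' m).
  { rewrite (sum_n_m_Chasles a n' m' m) by lia.
    pose proof (sum_n_m_nonneg a (S m') m Ha). change plus with Rplus. lra. }
  destruct (Nat.eq_dec n n') as [<- | Hne]; [exact Hright |].
  rewrite (sum_n_m_Chasles a n (Nat.pred n') m) by lia.
  replace (S (Nat.pred n')) with n' by lia.
  pose proof (sum_n_m_nonneg a n (Nat.pred n') Ha). change plus with Rplus. lra.
Qed.

Lemma sum_n_m_abs_telescope (a : nat -> R) (n d : nat) :
  Rabs (a (S (n + d)) - a n) <= sum_n_m (fun l => Rabs (a (S l) - a l)) n (n + d).
Proof.
  induction d as [|d IH].
  - rewrite Nat.add_0_r, sum_n_n. lra.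
  - rewrite Nat.add_succ_r, sum_n_Sm by lia. change plus with Rplus.
    replace (a (S (S (n + d))) - a n)
      with ((a (S (n + d)) - a n) + (a (S (S (n + d))) - a (S (n + d)))) by ring.
    eapply Rle_trans; [apply Rabs_triang | lra].
Qed.

(* Induction step of Cauchy-Schwarz; the cross term is absorbed by [N (2 s x) <= s^2 + N^2 x^2]. *)
Lemma sqr_add_le_count_step (N Q s x : R) :
  0 <= N -> 0 <= Q -> s ^ 2 <= N * Q -> (s + x) ^ 2 <= (N + 1) * (Q + x ^ 2).
Proof.
  intros HN HQ Hs.
  assert (Hcross : 2 * s * x <= Q + N * x ^ 2).
  { destruct (Req_dec N 0) as [-> | HN0].
    - assert (Hs0 : s = 0) by (apply Rsqr_0_uniq; unfold Rsqr; nra).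
      subst s. lra.
    - assert (HNpos : 0 < N) by lra.
      assert (N * (2 * s * x) <= N * (Q + N * x ^ 2)) by (pose proof (pow2_ge_0 (s - N * x)); nra).
      apply (Rmult_le_reg_l N); lra. }
  nra.
Qed.

Lemma sum_n_m_sqr_le (x : nat -> R) (n d : nat) :
  (sum_n_m x n (n + d)) ^ 2 <= INR (S d) * sum_n_m (fun k => x k ^ 2) n (n + d).
Proof.
  induction d as [|d IH].
  - rewrite Nat.add_0_r, !sum_n_n. simpl. lra.
  - rewrite Nat.add_succ_r, !sum_n_Sm by lia. change plus with Rplus.
    rewrite (S_INR (S d)).
    apply sqr_add_le_count_step; [apply pos_INR | | exact IH].
    apply sum_n_m_nonneg. intro. apply pow2_ge_0.
Qed.

Lemma fold_seq_sum_n_m (g : nat -> R) (a n : nat) :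
  fold_right Rplus 0 (map g (seq (S a) n)) = sum_n_m g (S a) (a + n).
Proof.
  revert a; induction n as [|n IH]; intro a.
  - rewrite sum_n_m_zero by lia. reflexivity.
  - simpl (seq _ _). simpl (map _ _). simpl fold_right.
    rewrite IH, (sum_Sn_m g (S a)) by lia.
    replace (a + S n)%nat with (S a + n)%nat by lia. reflexivity.
Qed.

Lemma gsum_sum_n_m (K : nat) (f : Z -> R) :
  gsum K f = sum_n_m (fun i => f (Z.of_nat i)) 1 K.
Proof. exact (fold_seq_sum_n_m (fun i => f (Z.of_nat i)) 0 K). Qed.

Lemma gsum_nonneg (K : nat) (f : Z -> R) : (forall k, 0 <= f k) -> 0 <= gsum K f.
Proof. intro Hf. rewrite gsum_sum_n_m. apply sum_n_m_nonneg. intro. apply Hf. Qed.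

Lemma gmax_abs_le (K : nat) (v : Z -> R) (B : R) :
  0 <= B -> (forall i, (1 <= i <= K)%nat -> Rabs (v (Z.of_nat i)) <= B) ->
  gmax_abs K v <= B.
Proof.
  intros HB Hv. unfold gmax_abs.
  assert (Hrange : forall a n, (1 <= a)%nat -> (a + n <= K + 1)%nat ->
    fold_right Rmax 0 (map (fun i => Rabs (v (Z.of_nat i))) (seq a n)) <= B).
  { intros a n; revert a; induction n as [|n IH]; intros a Ha Han; simpl.
    - exact HB.
    - apply Rmax_lub; [apply Hv | apply IH]; lia. }
  apply Hrange; lia.
Qed.

Lemma h1norm_sqr (K : nat) (dx : R) (v : Z -> R) : 0 <= dx ->
  h1norm K dx v ^ 2 = gsum K (fun k => v k ^ 2 * dx) + gsum K (fun k => dplus dx v k ^ 2 * dx).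
Proof.
  intro Hdx.
  assert (Hsq : forall w : Z -> R, 0 <= gsum K (fun k => w k ^ 2 * dx)).
  { intro w. apply gsum_nonneg. intro k. pose proof (pow2_ge_0 (w k)). nra. }
  unfold h1norm, l2norm.
  rewrite (pow2_sqrt (gsum K (fun k => v k ^ 2 * dx))),
    (pow2_sqrt (gsum K (fun k => dplus dx v k ^ 2 * dx))) by apply Hsq.
  apply pow2_sqrt. pose proof (Hsq v). pose proof (Hsq (dplus dx v)). lra.
Qed.

Lemma grid_abs_sub_le_variation (K : nat) (a : nat -> R) (i j : nat) :
  (1 <= i <= K)%nat -> (1 <= j <= K)%nat ->
  Rabs (a j - a i) <= sum_n_m (fun l => Rabs (a (S l) - a l)) 1 K.
Proof.
  assert (Hvar : forall i' j', (1 <= i' < j')%nat -> (j' <= K)%nat ->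
    Rabs (a j' - a i') <= sum_n_m (fun l => Rabs (a (S l) - a l)) 1 K).
  { intros i' j' Hij HjK.
    replace j' with (S (i' + (j' - i' - 1))) at 1 by lia.
    eapply Rle_trans; [apply sum_n_m_abs_telescope |].
    apply sum_n_m_le_subrange; [intro; apply Rabs_pos | lia..]. }
  intros Hi Hj.
  destruct (lt_eq_lt_dec i j) as [[Hlt | ->] | Hgt].
  - apply Hvar; lia.
  - unfold Rminus. rewrite Rplus_opp_r, Rabs_R0.
    apply sum_n_m_nonneg. intro. apply Rabs_pos.
  - rewrite Rabs_minus_sym. apply Hvar; lia.
Qed.

Lemma grid_sqr_le_average (K : nat) (a : nat -> R) (j : nat) : (1 <= j <= K)%nat ->
  INR K * a j ^ 2 <=
    2 * sum_n_m (fun i => a i ^ 2) 1 K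
    + INR K * (2 * sum_n_m (fun l => Rabs (a (S l) - a l)) 1 K ^ 2).
Proof.
  intro Hj.
  set (V := sum_n_m (fun l => Rabs (a (S l) - a l)) 1 K).
  assert (Hpt : forall i, (1 <= i <= K)%nat -> a j ^ 2 <= 2 * a i ^ 2 + 2 * V ^ 2).
  { intros i Hi.
    pose proof (grid_abs_sub_le_variation K a i j Hi Hj) as Hji.
    assert (Hd2 : (a j - a i) ^ 2 <= V ^ 2).
    { rewrite <- pow2_abs. apply pow_incr. split; [apply Rabs_pos | exact Hji]. }
    pose proof (pow2_ge_0 (2 * a i - a j)). nra. }
  apply sum_n_m_le_loc in Hpt; [| lia].
  rewrite (sum_n_m_plus (fun i => 2 * a i ^ 2) (fun _ => 2 * V ^ 2)),
    (sum_n_m_mult_l 2 (fun i => a i ^ 2)), !sum_n_m_const in Hpt.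
  replace (S K - 1)%nat with K in Hpt by lia. exact Hpt.
Qed.

Lemma grid_sqr_le_l2_dplus (K : nat) (dx : R) (e : Z -> R) (j : nat) :
  0 < dx -> (1 <= j <= K)%nat ->
  e (Z.of_nat j) ^ 2 * (INR K * dx) <=
    2 * gsum K (fun k => e k ^ 2 * dx) + 2 * (INR K * dx) ^ 2 * gsum K (fun k => dplus dx e k ^ 2 * dx).
Proof.
  intros Hdx Hj.
  destruct K as [|K']; [lia |].
  set (a := fun i : nat => e (Z.of_nat i)).
  set (A := sum_n_m (fun i => a i ^ 2) 1 (S K')).
  set (D := sum_n_m (fun l => (a (S l) - a l) ^ 2) 1 (S K')).
  set (V := sum_n_m (fun l => Rabs (a (S l) - a l)) 1 (S K')).
  assert (EA : gsum (S K') (fun k => e k ^ 2 * dx) = A * dx).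
  { rewrite gsum_sum_n_m. exact (sum_n_m_mult_r dx _ 1 (S K')). }
  assert (ED : gsum (S K') (fun k => dplus dx e k ^ 2 * dx) = D / dx).
  { rewrite gsum_sum_n_m. unfold Rdiv.
    etransitivity; [| exact (sum_n_m_mult_r (/ dx) _ 1 (S K'))].
    apply sum_n_m_ext. intro l. unfold a. rewrite Nat2Z.inj_succ.
    change (((e (Z.of_nat l + 1)%Z - e (Z.of_nat l)) / dx) ^ 2 * dx
            = (e (Z.of_nat l + 1)%Z - e (Z.of_nat l)) ^ 2 * / dx).
    field. lra. }
  assert (HV : V ^ 2 <= INR (S K') * D).
  { replace D with (sum_n_m (fun l => Rabs (a (S l) - a l) ^ 2) 1 (S K'))
      by (apply sum_n_m_ext; intro; apply pow2_abs).
    apply (sum_n_m_sqr_le _ 1 K'). }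
  pose proof (grid_sqr_le_average (S K') a j Hj) as Havg. fold A V in Havg.
  rewrite EA, ED. change (e (Z.of_nat j)) with (a j).
  assert (HK : 0 < INR (S K')) by (apply lt_0_INR; lia).
  replace (2 * (INR (S K') * dx) ^ 2 * (D / dx)) with (2 * INR (S K') * dx * (INR (S K') * D))
    by (field; lra).
  apply (Rmult_le_compat_r dx) in Havg; [| lra].
  apply (Rmult_le_compat_l (2 * INR (S K') * dx)) in HV; [| nra].
  nra.
Qed.

Lemma Lhat_pos (L : R) : 0 < L -> 0 < Lhat L.
Proof.
  intro HL. unfold Lhat. apply Rmult_lt_0_compat; [apply sqrt_lt_R0; lra |].
  eapply Rlt_le_trans; [apply sqrt_lt_R0; exact HL | apply Rmax_l].
Qed.

(* [Lhat L ^ 2 = 2 max(L, 1/L)], which dominates both weights [2/L] and [2 L]. *)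
Lemma Lhat_sqr_weights (L a b : R) : 0 < L -> 0 <= a -> 0 <= b ->
  2 * a + 2 * L ^ 2 * b <= L * Lhat L ^ 2 * (a + b).
Proof.
  intros HL Ha Hb. unfold Lhat.
  set (s := sqrt L). set (w := Rmax s (1 / s)).
  assert (Hs : 0 < s) by (apply sqrt_lt_R0; exact HL).
  assert (Es : s ^ 2 = L) by (apply pow2_sqrt; lra).
  assert (Hw1 : s <= w) by apply Rmax_l.
  assert (Hw2 : 1 / s <= w) by apply Rmax_r.
  assert (Hws : 1 <= w * s).
  { apply (Rmult_le_compat_r s) in Hw2; [| lra].
    replace (1 / s * s) with 1 in Hw2 by (field; lra). exact Hw2. }
  rewrite Rpow_mult_distr, pow2_sqrt by lra.
  assert (Hsq1 : L <= w ^ 2) by nra.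
  assert (Hsq2 : 1 <= L * w ^ 2) by nra.
  pose proof (Rmult_le_compat_r a _ _ Ha Hsq2).
  pose proof (Rmult_le_compat_r (L * b) _ _ (Rmult_le_pos L b (Rlt_le _ _ HL) Hb) Hsq1).
  nra.
Qed.

Lemma discrete_sobolev (K : nat) (dx : R) (e : Z -> R) (j : nat) :
  0 < dx -> (1 <= j <= K)%nat ->
  Rabs (e (Z.of_nat j)) <= Lhat (INR K * dx) * h1norm K dx e.
Proof.
  intros Hdx Hj.
  assert (HL : 0 < INR K * dx) by (apply Rmult_lt_0_compat; [apply lt_0_INR; lia | exact Hdx]).
  set (X := gsum K (fun k => e k ^ 2 * dx)).
  set (Y := gsum K (fun k => dplus dx e k ^ 2 * dx)).
  assert (HX : 0 <= X).
  { apply gsum_nonneg. intro k. pose proof (pow2_ge_0 (e k)). nra. }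
  assert (HY : 0 <= Y).
  { apply gsum_nonneg. intro k. pose proof (pow2_ge_0 (dplus dx e k)). nra. }
  pose proof (grid_sqr_le_l2_dplus K dx e j Hdx Hj) as Hsq. fold X Y in Hsq.
  pose proof (Lhat_sqr_weights (INR K * dx) X Y HL HX HY) as Hw.
  assert (Eh : h1norm K dx e ^ 2 = X + Y) by (apply h1norm_sqr; lra).
  rewrite <- Eh in Hw.
  assert (Hpos : 0 <= Lhat (INR K * dx) * h1norm K dx e).
  { apply Rmult_le_pos; [apply Rlt_le, Lhat_pos, HL | apply sqrt_pos]. }
  assert (Hsq' : Rabs (e (Z.of_nat j)) ^ 2 <= (Lhat (INR K * dx) * h1norm K dx e) ^ 2).
  { rewrite pow2_abs, Rpow_mult_distr. nra. }
  pose proof (Rabs_pos (e (Z.of_nat j))). nra.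
Qed.

Lemma error_budget (lh C dt dx s r : R) :
  0 < lh -> 0 < C -> 0 <= dt <= dx -> s < r -> dx <= sqrt ((r - s) / (2 * lh * C)) ->
  lh * (C * (dt ^ 2 + dx ^ 2)) <= r - s.
Proof.
  intros Hlh HC Hdt Hsr Hdx.
  set (w := (r - s) / (2 * lh * C)) in Hdx.
  assert (Hw : 0 <= w) by (apply Rlt_le, Rdiv_lt_0_compat; nra).
  assert (Hdx2 : dx ^ 2 <= w).
  { rewrite <- (pow2_sqrt w) by exact Hw. apply pow_incr. lra. }
  assert (Ew : lh * (C * (2 * w)) = r - s) by (unfold w; field; lra).
  assert (Hdt2 : dt ^ 2 <= dx ^ 2) by (apply pow_incr; lra).
  rewrite <- Ew. apply Rmult_le_compat_l; [lra |]. apply Rmult_le_compat_l; lra.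
Qed.

Lemma grid_node_mem (a : R) (i N : nat) :
  0 <= a -> (0 < N)%nat -> (i <= N)%nat -> 0 <= INR i * (a / INR N) <= a.
Proof.
  intros Ha HN HiN.
  assert (HNr : 0 < INR N) by (apply lt_0_INR; exact HN).
  assert (Hi : 0 <= INR i <= INR N) by (split; [apply pos_INR | apply le_INR; exact HiN]).
  assert (Hstep : 0 <= a / INR N) by (apply Rdiv_le_0_compat; lra).
  split; [apply Rmult_le_pos; lra |].
  replace a with (INR N * (a / INR N)) at 2 by (field; lra).
  apply Rmult_le_compat_r; lra.
Qed.

Theorem corollary3p7
  (L T alpha beta q r C supu : R) (K M M0 : nat)
  (u : R -> R -> R) (U : nat -> Z -> R)
  (HL : 0 < L) (HT : 0 < T) (HK : (0 < K)%nat) (HM : (0 < M)%nat)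
  (Hbeta : beta <> 0) (Hq : 1 < q) (HM0 : (M0 < M)%nat)
  (Hu : kdv_solution alpha beta L T u)
  (* supu = sup_{(t,x) in [0,T]x[0,L]} |u(t,x)| *)
  (HS : is_lub (fun y => exists t x, 0 <= t <= T /\ 0 <= x <= L /\ y = Rabs (u t x)) supu)
  (Hr : supu < r)
  (Hper : forall n k, U n (k + Z.of_nat K)%Z = U n k)
  (H0 : forall k, U 0%nat k = u 0 (IZR k * (L / INR K)))
  (Hscheme : forall n, (n <= M0)%nat ->
     scheme_step (L / INR K) (T / INR M) alpha beta (U n) (U (S n)))
  (Hrmax : forall m, (m <= M0)%nat -> supnorm K (U m) <= r)
  (Hdt : T / INR M < Rmin (veps1 alpha beta q r (L / INR K)) (veps2 alpha beta q r (L / INR K)))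
  (Hlast : supnorm K (U (S M0)) <= q * r)
  (HC : 0 < C)
  (Hdtdx : T / INR M <= L / INR K)
  (Herr : forall m, (m <= S M0)%nat ->
     h1norm K (L / INR K)
       (fun k => U m k - u (INR m * (T / INR M)) (IZR k * (L / INR K)))
     <= C * ((T / INR M) ^ 2 + (L / INR K) ^ 2))
  (Hdx : L / INR K <= sqrt ((r - supu) / (2 * Lhat L * C))) :
  forall m, (m <= S M0)%nat -> supnorm K (U m) <= r.
Proof.
  intros m Hm.
  set (dx := L / INR K) in *. set (dt := T / INR M) in *.
  assert (Hdx0 : 0 < dx) by (apply Rdiv_lt_0_compat; [lra | apply lt_0_INR; lia]).
  assert (Hdt0 : 0 < dt) by (apply Rdiv_lt_0_compat; [lra | apply lt_0_INR; lia]).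
  assert (EL : INR K * dx = L) by (unfold dx; field; apply not_0_INR; lia).
  pose proof (error_budget (Lhat L) C dt dx supu r (Lhat_pos L HL) HC
                (conj (Rlt_le _ _ Hdt0) Hdtdx) Hr Hdx) as Hbudget.
  assert (Hsup : forall t x, 0 <= t <= T -> 0 <= x <= L -> Rabs (u t x) <= supu).
  { intros t x Ht Hx. apply (proj1 HS). exists t, x. auto. }
  set (t := INR m * dt).
  set (e := fun k => U m k - u t (IZR k * dx)).
  apply gmax_abs_le.
  { pose proof (Rabs_pos (u 0 0)). pose proof (Hsup 0 0 ltac:(lra) ltac:(lra)). lra. }
  intros j Hj.
  set (x := IZR (Z.of_nat j) * dx).
  assert (Hux : Rabs (u t x) <= supu).
  { apply Hsup.
    - apply grid_node_mem; [lra | lia | lia].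
    - unfold x. rewrite <- INR_IZR_INZ. apply grid_node_mem; [lra | lia | lia]. }
  pose proof (discrete_sobolev K dx e j Hdx0 Hj) as Hsob. rewrite EL in Hsob.
  pose proof (Rmult_le_compat_l (Lhat L) _ _ (Rlt_le _ _ (Lhat_pos L HL)) (Herr m Hm)) as He.
  replace (U m (Z.of_nat j)) with (e (Z.of_nat j) + u t x) by (unfold e, x; ring).
  pose proof (Rabs_triang (e (Z.of_nat j)) (u t x)). fold dx dt t e in He. lra.
Qed.
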